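(* Let $n>5$ with $n\equiv 0\pmod 4$. Over all even $r\in[2,n-2]$, $E(D_n^s[\boldsymbol r,\boldsymbol{n-r}])$ attains its maximum at $r=4$. More precisely: if $\frac n2\equiv 0\pmod 4$, then $E(D_n^s[\boldsymbol r,\boldsymbol{n-r}])$ is strictly decreasing as $r$ runs through $4,8,\dots,\frac n2,\ \frac n2-2,\frac n2-6,\dots,2$ (in this order); if $\frac n2\equiv 2\pmod 4$, then it is strictly decreasing as $r$ runs through $4,8,\dots,\frac n2-2,\ \frac n2,\frac n2-4,\dots,2$.
   Context: A signed digraph (sidigraph) is a digraph in which every arc carries a sign $+1$ or $-1$; its adjacency matrix $A(S)=[a_{ij}]$ has $a_{ij}$ equal to the sign of the arc $w_iw_j$ if it exists and $0$ otherwise. If $\rho_1,\dots,\rho_n$ are the eigenvalues of $A(S)$, the energy of $S$ is $E(S)=\sum_{k=1}^n|\mathrm{Re}(\rho_k)|$. The sign of a directed cycle is the product of the signs of its arcs. For $k\ge 2$, $C_k$ denotes a directed cycle of length $k$ with sign $+1$ and $\boldsymbol{C}_k$ a directed cycle of length $k$ with sign $-1$. It is known that $E(C_k)=2\cot\frac{\pi}{k}$ if $k\equiv0\pmod 4$, $2\csc\frac{\pi}{k}$ if $k\equiv 2\pmod 4$, $\csc\frac{\pi}{2k}$ if $k$ is odd; and $E(\boldsymbol C_k)=2\csc\frac{\pi}{k}$ if $k\equiv0\pmod 4$, $2\cot\frac{\pi}{k}$ if $k\equiv 2\pmod 4$, $\csc\frac{\pi}{2k}$ if $k$ is odd. For integers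 $p,q\ge 2$ with $p+q\le n$, $D_n^s[p,q]$, $D_n^s[\boldsymbol p,\boldsymbol q]$, $D_n^s[\boldsymbol p,q]$, $D_n^s[p,\boldsymbol q]$ denote an $n$-vertex sidigraph whose only directed cycles are two vertex-disjoint cycles of lengths $p$ and $q$ (all other vertices lying on no directed cycle), where a bold entry indicates that the cycle of that length is negative and a non-bold entry that it is positive. Its energy is the sum of the energies of its two cycles, e.g. $E(D_n^s[\boldsymbol p,\boldsymbol q])=E(\boldsymbol C_p)+E(\boldsymbol C_q)$; in particular the order of the two entries does not matter. *)

From Stdlib Require Import Reals Lia Arith List Sorted.
Import ListNotations.
Open Scope R_scope.

Definition csc (x : R) : R := / sin x.
Definition cot (x : R) : R := cos x / sin x.

Definition E_poscycle (k : nat) : R :=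
  if (k mod 4 =? 0)%nat then 2 * cot (PI / INR k)
  else if (k mod 4 =? 2)%nat then 2 * csc (PI / INR k)
  else csc (PI / (2 * INR k)).

(* Energy of the negative directed cycle (bold C_k) (k >= 2), as recalled in the paper. *)
Definition E_negcycle (k : nat) : R :=
  if (k mod 4 =? 0)%nat then 2 * csc (PI / INR k)
  else if (k mod 4 =? 2)%nat then 2 * cot (PI / INR k)
  else csc (PI / (2 * INR k)).

(* E(D_n^s[bold p, bold q]) = E(bold C_p) + E(bold C_q)  (n is the number of
   vertices; it does not affect the energy). *)
Definition E_D_negneg (n p q : nat) : R := E_negcycle p + E_negcycle q.

(* The order of r-values in the statement, for m = n/2:
   case m = 0 mod 4:  4, 8, ..., m, m-2, m-6, ..., 2
   case m = 2 mod 4:  4, 8, ..., m-2, m, m-4, ..., 2 *)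
Definition order_case0 (m : nat) : list nat :=
  map (fun k => 4 * (k + 1))%nat (seq 0 (m / 4))
  ++ map (fun j => m - 2 - 4 * j)%nat (seq 0 (m / 4)).

Definition order_case2 (m : nat) : list nat :=
  map (fun k => 4 * (k + 1))%nat (seq 0 ((m - 2) / 4))
  ++ map (fun j => m - 4 * j)%nat (seq 0 ((m - 2) / 4 + 1)).

Definition strictly_decreasing_along (f : nat -> R) (l : list nat) : Prop :=
  StronglySorted (fun a b => f b < f a) l.

From Stdlib Require Import Reals Arith List Lra Lia Sorted.
From Coquelicot Require Import Coquelicot.
Open Scope R_scope.

(* For k = 0 (mod 4) the negative k-cycle has energy h(k) = 2 csc(pi/k), for
   k = 2 (mod 4) it has energy c(k) = 2 cot(pi/k).  Since n = 0 (mod 4), both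
   cycles of D_n^s[r, n-r] lie in the residue class of r, so the energy F(r)
   of D_n^s[r, n-r] is h(r) + h(n-r) or c(r) + c(n-r).

   The derivatives of h and c at x >= 2 are (2/pi) g(pi/x) with
   g(t) = t^2 cos t / sin^2 t (decreasing on (0, pi/2]), resp. with
   g(t) = t^2 / sin^2 t (increasing there); so h is strictly convex and c
   strictly concave on [2, oo).  By the mean value theorem, moving both
   arguments of h(a) + h(b) inward by 4 strictly decreases it and does the
   opposite for c.  Moreover h(x) > 2x/pi > c(x), because sin t < t and
   t cos t < sin t on (0, pi/2].

   Hence F decreases along r = 4, 8, ... up to n/2 and
   increases along r = 2, 6, ... up to n/2, while every value at r = 0 (mod 4)
   exceeds 2n/pi, which exceeds every value at r = 2 (mod 4).  With the
   symmetry F(r) = F(n-r) this gives the maximum at r = 4; the two orderings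
   follow from a general criterion for a function to decrease along a
   concatenation of two blocks. *)

Ltac euclid4 k :=
  pose proof (Nat.div_mod_eq k 4); pose proof (Nat.mod_upper_bound k 4 ltac:(lia)).
Ltac euclid2 k :=
  pose proof (Nat.div_mod_eq k 2); pose proof (Nat.mod_upper_bound k 2 ltac:(lia)).

Lemma lt_of_deriv_pos (f f' : R -> R) (x y : R) :
  x < y ->
  (forall c, x <= c <= y -> derivable_pt_lim f c (f' c)) ->
  (forall c, x < c < y -> 0 < f' c) ->
  f x < f y.
Proof.
  intros Hxy Hder Hpos.
  destruct (MVT_cor2 f f' x y Hxy Hder) as [c [Hdiff Hc]].
  assert (0 < f' c * (y - x)) by (apply Rmult_lt_0_compat; [apply Hpos|]; lra).
  lra.
Qed.

Lemma sum_shift_inward_lt (f f' : R -> R) (a b d : R) :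
  0 < d -> a + d <= b - d ->
  (forall x, a <= x <= b -> derivable_pt_lim f x (f' x)) ->
  (forall x y, a <= x -> x < y -> y <= b -> f' x < f' y) ->
  f (a + d) + f (b - d) < f a + f b.
Proof.
  intros Hd Hab Hder Hmono.
  destruct (MVT_cor2 f f' a (a + d) ltac:(lra)) as [c1 [E1 C1]].
  { intros c Hc. apply Hder. lra. }
  destruct (MVT_cor2 f f' (b - d) b ltac:(lra)) as [c2 [E2 C2]].
  { intros c Hc. apply Hder. lra. }
  assert (Hc12 : f' c1 < f' c2) by (apply Hmono; lra).
  replace (a + d - a) with d in E1 by ring.
  replace (b - (b - d)) with d in E2 by ring.
  assert (f' c1 * d < f' c2 * d) by (apply Rmult_lt_compat_r; lra).
  lra.
Qed.

(* t cos t < sin t on (0, pi): the function sin t - t cos t vanishes at 0 and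
   has derivative t sin t > 0. *)
Lemma mul_cos_lt_sin (t : R) : 0 < t < PI -> t * cos t < sin t.
Proof.
  intros Ht.
  assert (Hphi : sin 0 - 0 * cos 0 < sin t - t * cos t).
  { apply (lt_of_deriv_pos (fun u => sin u - u * cos u) (fun u => u * sin u));
      [lra| |].
    - intros c _. apply is_derive_Reals. auto_derive; [exact I|]. ring.
    - intros c Hc. apply Rmult_lt_0_compat; [lra|]. apply sin_gt_0; lra. }
  rewrite sin_0 in Hphi. lra.
Qed.

Lemma pi_div_range (x : R) : 2 <= x -> 0 < PI / x <= PI / 2.
Proof.
  intros Hx. assert (HP := PI_RGT_0). split.
  - apply Rdiv_lt_0_compat; lra.
  - apply Rmult_le_compat_l; [lra|]. apply Rinv_le_contravar; lra.
Qed.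

Lemma pi_div_lt (x1 x2 : R) : 2 <= x1 -> x1 < x2 -> PI / x2 < PI / x1.
Proof.
  intros H1 H2. assert (HP := PI_RGT_0).
  apply Rmult_lt_compat_l; [lra|]. apply Rinv_lt_contravar; nra.
Qed.

(* The derivative of x |-> 2 csc(pi/x) is (2/pi) csc_slope(pi/x). *)
Definition csc_slope (t : R) : R := t * t * cos t / (sin t * sin t).

(* csc_slope is strictly decreasing on (0, pi/2]: its derivative is
   t (2 sin t cos t - t (1 + cos^2 t)) / sin^3 t, and the bracket equals
   -t (1 - cos t)^2 - 2 cos t (t - sin t) < 0. *)
Lemma csc_slope_decreasing (t1 t2 : R) :
  0 < t1 -> t1 < t2 -> t2 <= PI / 2 -> csc_slope t2 < csc_slope t1.
Proof.
  intros H1 H12 H2.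
  assert (HP := PI_RGT_0).
  enough (Hopp : - csc_slope t1 < - csc_slope t2) by lra.
  apply (lt_of_deriv_pos (fun t => - csc_slope t)
    (fun c => - (c * (2 * sin c * cos c - c * (1 + cos c * cos c))
                 / (sin c * sin c * sin c)))); [lra| |].
  - intros c Hc. assert (Hs : 0 < sin c) by (apply sin_gt_0; lra).
    apply is_derive_Reals. unfold csc_slope. auto_derive; [nra|].
    assert (Hpyth := sin2_cos2 c). unfold Rsqr in Hpyth.
    replace (1 + cos c * cos c) with (sin c * sin c + 2 * cos c * cos c) by lra.
    field. lra.
  - intros c Hc.
    assert (Hs : 0 < sin c) by (apply sin_gt_0; lra).
    assert (Hsx : sin c < c) by (apply sin_lt_x; lra).
    assert (Hco0 : 0 <= cos c) by (apply cos_ge_0; lra).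
    assert (Hco1 : cos c < 1) by (rewrite <- cos_0; apply cos_decreasing_1; lra).
    assert (0 <= cos c * (c - sin c)) by (apply Rmult_le_pos; lra).
    assert (0 < c * ((1 - cos c) * (1 - cos c))) by (apply Rmult_lt_0_compat; nra).
    assert (Hbr : 2 * sin c * cos c - c * (1 + cos c * cos c) < 0) by nra.
    assert (0 < sin c * sin c * sin c) by (repeat apply Rmult_lt_0_compat; lra).
    rewrite <- Ropp_0. apply Ropp_lt_contravar.
    apply Rdiv_neg_pos; [nra | lra].
Qed.

(* The derivative of x |-> 2 cot(pi/x) is (2/pi) cot_slope(pi/x). *)
Definition cot_slope (t : R) : R := t * t / (sin t * sin t).

(* cot_slope is strictly increasing on (0, pi/2]: its derivative is
   2 t (sin t - t cos t) / sin^3 t > 0. *)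
Lemma cot_slope_increasing (t1 t2 : R) :
  0 < t1 -> t1 < t2 -> t2 <= PI / 2 -> cot_slope t1 < cot_slope t2.
Proof.
  intros H1 H12 H2.
  assert (HP := PI_RGT_0).
  apply (lt_of_deriv_pos cot_slope
    (fun c => 2 * c * (sin c - c * cos c) / (sin c * sin c * sin c))); [lra| |].
  - intros c Hc. assert (Hs : 0 < sin c) by (apply sin_gt_0; lra).
    apply is_derive_Reals. unfold cot_slope. auto_derive; [nra|].
    field. lra.
  - intros c Hc.
    assert (Hs : 0 < sin c) by (apply sin_gt_0; lra).
    assert (Hmc : c * cos c < sin c) by (apply mul_cos_lt_sin; lra).
    apply Rdiv_lt_0_compat.
    + apply Rmult_lt_0_compat; lra.
    + repeat apply Rmult_lt_0_compat; lra.
Qed.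

Definition csc_energy (x : R) : R := 2 * csc (PI / x).
Definition cot_energy (x : R) : R := 2 * cot (PI / x).

Lemma csc_energy_deriv (x : R) :
  2 <= x -> derivable_pt_lim csc_energy x (2 / PI * csc_slope (PI / x)).
Proof.
  intros Hx. destruct (pi_div_range x Hx) as [T1 T2].
  assert (Hs : 0 < sin (PI / x)) by (apply sin_gt_0; lra).
  assert (HP := PI_RGT_0).
  apply is_derive_Reals. unfold csc_energy, csc_slope, csc.
  auto_derive; [repeat split; lra|].
  change (PI * / x) with (PI / x). field. split; lra.
Qed.

Lemma cot_energy_deriv (x : R) :
  2 <= x -> derivable_pt_lim cot_energy x (2 / PI * cot_slope (PI / x)).
Proof.
  intros Hx. destruct (pi_div_range x Hx) as [T1 T2].
  assert (Hs : 0 < sin (PI / x)) by (apply sin_gt_0; lra).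
  assert (HP := PI_RGT_0).
  apply is_derive_Reals. unfold cot_energy, cot_slope, cot.
  auto_derive; [repeat split; lra|].
  assert (Hpyth := sin2_cos2 (PI / x)). unfold Rsqr in Hpyth.
  change (PI * / x) with (PI / x).
  field_simplify; [|split; lra|split; lra].
  replace (2 * PI * sin (PI / x) ^ 2 + 2 * PI * cos (PI / x) ^ 2) with (2 * PI)
    by (simpl; nra).
  reflexivity.
Qed.

Lemma csc_energy_shift_inward (a b : R) :
  2 <= a -> a + 4 <= b - 4 ->
  csc_energy (a + 4) + csc_energy (b - 4) < csc_energy a + csc_energy b.
Proof.
  intros Ha Hab. assert (HP := PI_RGT_0).
  apply (sum_shift_inward_lt csc_energy (fun x => 2 / PI * csc_slope (PI / x)));
    [lra | lra | intros x Hx; apply csc_energy_deriv; lra |].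
  intros x y Hx Hxy Hy.
  destruct (pi_div_range y ltac:(lra)) as [T1 _].
  destruct (pi_div_range x ltac:(lra)) as [_ T2].
  assert (csc_slope (PI / x) < csc_slope (PI / y))
    by (apply csc_slope_decreasing; [lra | apply pi_div_lt; lra | lra]).
  apply Rmult_lt_compat_l; [apply Rdiv_lt_0_compat|]; lra.
Qed.

Lemma cot_energy_shift_inward (a b : R) :
  2 <= a -> a + 4 <= b - 4 ->
  cot_energy a + cot_energy b < cot_energy (a + 4) + cot_energy (b - 4).
Proof.
  intros Ha Hab. assert (HP := PI_RGT_0).
  enough (Hopp : - cot_energy (a + 4) + - cot_energy (b - 4)
                 < - cot_energy a + - cot_energy b) by lra.
  apply (sum_shift_inward_lt (fun x => - cot_energy x)
           (fun x => - (2 / PI * cot_slope (PI / x)))); [lra | lra | |].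
  - intros x Hx. apply (derivable_pt_lim_opp cot_energy). apply cot_energy_deriv. lra.
  - intros x y Hx Hxy Hy.
    destruct (pi_div_range y ltac:(lra)) as [T1 _].
    destruct (pi_div_range x ltac:(lra)) as [_ T2].
    assert (cot_slope (PI / y) < cot_slope (PI / x))
      by (apply cot_slope_increasing; [lra | apply pi_div_lt; lra | lra]).
    apply Ropp_lt_contravar.
    apply Rmult_lt_compat_l; [apply Rdiv_lt_0_compat|]; lra.
Qed.

(* The two energies are separated by the line 2x/pi: sin t < t gives the lower
   bound for csc, t cos t < sin t the upper bound for cot. *)
Lemma csc_energy_gt (x : R) : 2 <= x -> 2 * x / PI < csc_energy x.
Proof.
  intros Hx. destruct (pi_div_range x Hx) as [T1 T2]. assert (HP := PI_RGT_0).
  assert (Hs : 0 < sin (PI / x)) by (apply sin_gt_0; lra).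
  assert (Hsx := sin_lt_x _ T1).
  unfold csc_energy, csc.
  replace (2 * x / PI) with (2 * / (PI / x)) by (field; split; lra).
  apply Rmult_lt_compat_l; [lra|]. apply Rinv_lt_contravar; nra.
Qed.

Lemma cot_energy_lt (x : R) : 2 <= x -> cot_energy x < 2 * x / PI.
Proof.
  intros Hx. destruct (pi_div_range x Hx) as [T1 T2]. assert (HP := PI_RGT_0).
  assert (Hs : 0 < sin (PI / x)) by (apply sin_gt_0; lra).
  assert (Hmc := mul_cos_lt_sin (PI / x) ltac:(lra)).
  unfold cot_energy, cot.
  replace (2 * x / PI) with (2 * / (PI / x)) by (field; split; lra).
  apply Rmult_lt_compat_l; [lra|].
  apply (Rmult_lt_reg_r (sin (PI / x) * (PI / x))); [nra|].
  field_simplify; lra.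
Qed.

Lemma sorted_map_seq {A : Type} (Rel : A -> A -> Prop) (g : nat -> A) (s q : nat) :
  (forall i, (s <= i)%nat -> (i + 1 < s + q)%nat -> Rel (g i) (g (i + 1)%nat)) ->
  Sorted Rel (map g (seq s q)).
Proof.
  revert s. induction q as [|q IH]; intros s Hstep; [constructor|].
  cbn [seq map]. constructor.
  - apply IH. intros i Hi Hiq. apply Hstep; lia.
  - destruct q as [|q]; constructor.
    replace (S s) with (s + 1)%nat by lia. apply Hstep; lia.
Qed.

Lemma StronglySorted_app {A : Type} (Rel : A -> A -> Prop) (l1 l2 : list A) :
  StronglySorted Rel l1 -> StronglySorted Rel l2 ->
  (forall x y, In x l1 -> In y l2 -> Rel x y) ->
  StronglySorted Rel (l1 ++ l2).
Proof.
  induction l1 as [|a l1 IH]; intros S1 S2 Hcross; [exact S2|].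
  inversion S1 as [|? ? S1' Ha]; subst. cbn. constructor.
  - apply IH; auto. intros x y Hx Hy. apply Hcross; simpl; auto.
  - apply Forall_app. split; [exact Ha|].
    apply Forall_forall. intros y Hy. apply Hcross; simpl; auto.
Qed.

Lemma decreasing_along_two_blocks (f : nat -> R) (c : R) (l1 l2 : list nat) :
  Sorted (fun a b => f b < f a) l1 -> Sorted (fun a b => f b < f a) l2 ->
  (forall x, In x l1 -> c < f x) -> (forall y, In y l2 -> f y < c) ->
  strictly_decreasing_along f (l1 ++ l2).
Proof.
  intros S1 S2 Habove Hbelow.
  assert (Htrans : Relations_1.Transitive (fun a b => f b < f a))
    by (intros a b d Hab Hbd; lra).
  apply StronglySorted_app; try (apply Sorted_StronglySorted; assumption).
  intros x y Hx Hy. apply Rlt_trans with c; auto.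
Qed.

Definition split_energy (n r : nat) : R := E_D_negneg n r (n - r).

Section SplitEnergy.

Variable n : nat.
Hypothesis n_mod4 : (n mod 4 = 0)%nat.

Lemma split_energy_sym (r : nat) :
  (r <= n)%nat -> split_energy n (n - r) = split_energy n r.
Proof.
  intros Hr. unfold split_energy, E_D_negneg.
  replace (n - (n - r))%nat with r by lia. ring.
Qed.

(* As n = 0 (mod 4), both cycles have lengths in the residue class of r. *)
Lemma split_energy_mod0 (r : nat) :
  (r mod 4 = 0)%nat -> (4 <= r <= n - 4)%nat ->
  split_energy n r = csc_energy (INR r) + csc_energy (INR n - INR r).
Proof.
  intros Hr Hb. euclid4 n. euclid4 r. euclid4 (n - r)%nat.
  assert (Hnr : ((n - r) mod 4 = 0)%nat) by lia.
  unfold split_energy, E_D_negneg, E_negcycle, csc_energy.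
  rewrite Hr, Hnr, minus_INR by lia. reflexivity.
Qed.

Lemma split_energy_mod2 (r : nat) :
  (r mod 4 = 2)%nat -> (2 <= r <= n - 2)%nat ->
  split_energy n r = cot_energy (INR r) + cot_energy (INR n - INR r).
Proof.
  intros Hr Hb. euclid4 n. euclid4 r. euclid4 (n - r)%nat.
  assert (Hnr : ((n - r) mod 4 = 2)%nat) by lia.
  unfold split_energy, E_D_negneg, E_negcycle, cot_energy.
  rewrite Hr, Hnr, minus_INR by lia. reflexivity.
Qed.

Lemma split_energy_mod0_gt (r : nat) :
  (r mod 4 = 0)%nat -> (4 <= r <= n - 4)%nat -> 2 * INR n / PI < split_energy n r.
Proof.
  intros Hr Hb. rewrite split_energy_mod0 by assumption.
  assert (HP := PI_RGT_0).
  assert (A1 := le_INR 4 r ltac:(lia)).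
  assert (A2 := le_INR (r + 4) n ltac:(lia)).
  rewrite plus_INR in A2. simpl in A1, A2.
  assert (B1 := csc_energy_gt (INR r) ltac:(lra)).
  assert (B2 := csc_energy_gt (INR n - INR r) ltac:(lra)).
  replace (2 * INR n / PI) with (2 * INR r / PI + 2 * (INR n - INR r) / PI)
    by (field; lra).
  lra.
Qed.

Lemma split_energy_mod2_lt (r : nat) :
  (r mod 4 = 2)%nat -> (2 <= r <= n - 2)%nat -> split_energy n r < 2 * INR n / PI.
Proof.
  intros Hr Hb. rewrite split_energy_mod2 by assumption.
  assert (HP := PI_RGT_0).
  assert (A1 := le_INR 2 r ltac:(lia)).
  assert (A2 := le_INR (r + 2) n ltac:(lia)).
  rewrite plus_INR in A2. simpl in A1, A2.
  assert (B1 := cot_energy_lt (INR r) ltac:(lra)).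
  assert (B2 := cot_energy_lt (INR n - INR r) ltac:(lra)).
  replace (2 * INR n / PI) with (2 * INR r / PI + 2 * (INR n - INR r) / PI)
    by (field; lra).
  lra.
Qed.

Lemma split_energy_step_mod0 (r : nat) :
  (r mod 4 = 0)%nat -> (4 <= r)%nat -> (2 * r + 8 <= n)%nat ->
  split_energy n (r + 4) < split_energy n r.
Proof.
  intros Hr H4 Hrn. euclid4 r. euclid4 (r + 4)%nat.
  rewrite (split_energy_mod0 r), (split_energy_mod0 (r + 4)) by lia.
  assert (A1 := le_INR 4 r ltac:(lia)).
  assert (A2 := le_INR (2 * r + 8) n ltac:(lia)).
  rewrite plus_INR, mult_INR in A2. simpl in A1, A2.
  rewrite plus_INR. simpl (INR 4).
  replace (INR n - (INR r + (1 + 1 + 1 + 1))) with (INR n - INR r - 4) by ring.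
  replace (INR r + (1 + 1 + 1 + 1)) with (INR r + 4) by ring.
  apply csc_energy_shift_inward; lra.
Qed.

Lemma split_energy_step_mod2 (r : nat) :
  (r mod 4 = 2)%nat -> (2 <= r)%nat -> (2 * r + 8 <= n)%nat ->
  split_energy n r < split_energy n (r + 4).
Proof.
  intros Hr H2 Hrn. euclid4 r. euclid4 (r + 4)%nat.
  rewrite (split_energy_mod2 r), (split_energy_mod2 (r + 4)) by lia.
  assert (A1 := le_INR 2 r ltac:(lia)).
  assert (A2 := le_INR (2 * r + 8) n ltac:(lia)).
  rewrite plus_INR, mult_INR in A2. simpl in A1, A2.
  rewrite plus_INR. simpl (INR 4).
  replace (INR n - (INR r + (1 + 1 + 1 + 1))) with (INR n - INR r - 4) by ring.
  replace (INR r + (1 + 1 + 1 + 1)) with (INR r + 4) by ring.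
  apply cot_energy_shift_inward; lra.
Qed.

Lemma split_energy_mod0_le_at_4 (j : nat) :
  (1 <= j)%nat -> (8 * j <= n)%nat -> split_energy n (4 * j) <= split_energy n 4.
Proof.
  induction j as [|j IH]; intros Hj Hjn; [lia|].
  destruct (Nat.eq_dec j 0) as [->|Hj0]; [right; reflexivity|].
  replace (4 * S j)%nat with (4 * j + 4)%nat by lia.
  apply Rle_trans with (split_energy n (4 * j)); [left | apply IH; lia].
  euclid4 (4 * j)%nat. apply split_energy_step_mod0; lia.
Qed.

(* First claim of the lemma: the maximum over even r is attained at r = 4.
   For r = 0 (mod 4) use the previous lemma and the symmetry r <-> n - r; for
   r = 2 (mod 4) the threshold 2n/pi separates the value from that at 4. *)
Lemma split_energy_max_at_4 (r : nat) :
  (8 <= n)%nat -> Nat.Even r -> (2 <= r <= n - 2)%nat ->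
  split_energy n r <= split_energy n 4.
Proof.
  intros Hn8 [k Hk] Hr. euclid4 n. euclid4 r.
  assert (Hcases : (r mod 4 = 0 \/ r mod 4 = 2)%nat) by lia.
  destruct Hcases as [Hr0|Hr2].
  - destruct (Nat.le_gt_cases (2 * r) n) as [Hhalf|Hhalf].
    + replace r with (4 * (r / 4))%nat by lia. apply split_energy_mod0_le_at_4; lia.
    + rewrite <- split_energy_sym by lia. euclid4 (n - r)%nat.
      replace (n - r)%nat with (4 * ((n - r) / 4))%nat by lia.
      apply split_energy_mod0_le_at_4; lia.
  - left. apply Rlt_trans with (2 * INR n / PI).
    + apply split_energy_mod2_lt; assumption.
    + apply split_energy_mod0_gt; [reflexivity | lia].
Qed.

Lemma split_energy_order_case0 :
  ((n / 2) mod 4 = 0)%nat -> strictly_decreasing_along (split_energy n) (order_case0 (n / 2)).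
Proof.
  intros Hm. euclid4 n. euclid2 n. euclid4 (n / 2)%nat.
  unfold order_case0.
  apply decreasing_along_two_blocks with (c := 2 * INR n / PI).
  - apply sorted_map_seq. intros i _ Hi.
    replace (4 * (i + 1 + 1))%nat with (4 * (i + 1) + 4)%nat by lia.
    euclid4 (4 * (i + 1))%nat. apply split_energy_step_mod0; lia.
  - apply sorted_map_seq. intros i _ Hi.
    replace (n / 2 - 2 - 4 * i)%nat with (n / 2 - 2 - 4 * (i + 1) + 4)%nat by lia.
    euclid4 (n / 2 - 2 - 4 * (i + 1))%nat. apply split_energy_step_mod2; lia.
  - intros x Hx. apply in_map_iff in Hx as [i [<- Hi]]. apply in_seq in Hi.
    euclid4 (4 * (i + 1))%nat. apply split_energy_mod0_gt; lia.
  - intros y Hy. apply in_map_iff in Hy as [i [<- Hi]]. apply in_seq in Hi.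
    euclid4 (n / 2 - 2 - 4 * i)%nat. apply split_energy_mod2_lt; lia.
Qed.

Lemma split_energy_order_case2 :
  ((n / 2) mod 4 = 2)%nat -> strictly_decreasing_along (split_energy n) (order_case2 (n / 2)).
Proof.
  intros Hm. euclid4 n. euclid2 n. euclid4 (n / 2)%nat. euclid4 (n / 2 - 2)%nat.
  unfold order_case2.
  apply decreasing_along_two_blocks with (c := 2 * INR n / PI).
  - apply sorted_map_seq. intros i _ Hi.
    replace (4 * (i + 1 + 1))%nat with (4 * (i + 1) + 4)%nat by lia.
    euclid4 (4 * (i + 1))%nat. apply split_energy_step_mod0; lia.
  - apply sorted_map_seq. intros i _ Hi.
    replace (n / 2 - 4 * i)%nat with (n / 2 - 4 * (i + 1) + 4)%nat by lia.
    euclid4 (n / 2 - 4 * (i + 1))%nat. apply split_energy_step_mod2; lia.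
  - intros x Hx. apply in_map_iff in Hx as [i [<- Hi]]. apply in_seq in Hi.
    euclid4 (4 * (i + 1))%nat. apply split_energy_mod0_gt; lia.
  - intros y Hy. apply in_map_iff in Hy as [i [<- Hi]]. apply in_seq in Hi.
    euclid4 (n / 2 - 4 * i)%nat. apply split_energy_mod2_lt; lia.
Qed.

End SplitEnergy.

Theorem lemma3p7 (n : nat) (Hn : (5 < n)%nat) (Hn4 : (n mod 4 = 0)%nat) :
  (forall r : nat, Nat.Even r -> (2 <= r <= n - 2)%nat ->
     E_D_negneg n r (n - r) <= E_D_negneg n 4 (n - 4))
  /\ ((n / 2) mod 4 = 0 -> 
      strictly_decreasing_along (fun r => E_D_negneg n r (n - r)) (order_case0 (n / 2)))%nat
  /\ ((n / 2) mod 4 = 2 ->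
      strictly_decreasing_along (fun r => E_D_negneg n r (n - r)) (order_case2 (n / 2)))%nat.
Proof.
  assert (Hn8 : (8 <= n)%nat) by (euclid4 n; lia).
  split; [|split].
  - intros r Hev Hr. exact (split_energy_max_at_4 n Hn4 r Hn8 Hev Hr).
  - exact (split_energy_order_case0 n Hn4).
  - exact (split_energy_order_case2 n Hn4).
Qed.
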